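(* Let $\mathcal{C}\subseteq\mathbb{F}^n$ be an $\mathbb{F}$-linear code and $\mathcal{L}=(\mathcal{L}_1,\dots,\mathcal{L}_\ell)\in\mathcal{P}(\mathbf{K}^{\mathbf{n}})$. Then for $\mathbf{c}\in\mathcal{C}^\perp$, we have $\mathbf{c}\in\mathcal{C}(\mathcal{L})$ if and only if $\mathbf{c}\cdot\mathbf{y}=0$ for all $\mathbf{y}=(\mathbf{y}^{(1)},\dots,\mathbf{y}^{(\ell)})$ with $\mathbf{y}^{(i)}\in\mathcal{L}_i$ for all $i$ (viewed as a vector in $\mathbb{F}^n$). Furthermore, $\mathcal{C}(\mathcal{L})$ is an $\mathbb{F}$-linear subspace of $\mathcal{C}^\perp$.
   Context: Setting: $\ell,n_1,\dots,n_\ell$ positive integers, $K_1,\dots,K_\ell$ finite fields with a common finite extension $\mathbb{F}$, $m_i=[\mathbb{F}:K_i]$, $n=\sum n_i$. $\mathcal{P}(\mathbf{K}^{\mathbf{n}})=\mathcal{P}(K_1^{n_1})\times\cdots\times\mathcal{P}(K_\ell^{n_\ell})$, where $\mathcal{P}(K_i^{n_i})$ is the lattice of $K_i$-subspaces of $K_i^{n_i}$; inclusion and orthogonal complements (w.r.t. the standard bilinear form on $K_i^{n_i}$) are componentwise. For $\mathbf{c}=(\mathbf{c}^{(1)},\dots,\mathbf{c}^{(\ell)})\in\mathbb{F}^n$ with $\mathbf{c}^{(i)}\in\mathbb{F}^{n_i}$, fix an ordered basis of $\mathbb{F}/K_i$ and let $\Gamma_i(\mathbf{c}^{(i)})$ be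 the $m_i\times n_i$ matrix over $K_i$ whose $j$-th column is the coordinate vector of the $j$-th entry of $\mathbf{c}^{(i)}$; the sum-rank support of $\mathbf{c}$ is $\mathrm{supp}(\mathbf{c})=(E_1,\dots,E_\ell)\in\mathcal{P}(\mathbf{K}^{\mathbf{n}})$ with $E_i$ the $K_i$-row space of $\Gamma_i(\mathbf{c}^{(i)})$. $\mathcal{C}^\perp$ is the orthogonal complement of $\mathcal{C}$ in $\mathbb{F}^n$ w.r.t. the standard bilinear form, and $\mathcal{C}(\mathcal{L})=\{\mathbf{c}\in\mathcal{C}^\perp:\mathrm{supp}(\mathbf{c})\subseteq\mathcal{L}^\perp\}$. *)

From HB Require Import structures.
From mathcomp Require Import all_boot all_order all_algebra.
Set Implicit Arguments. Unset Strict Implicit. Unset Printing Implicit Defensive.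
Import GRing.Theory.
Local Open Scope ring_scope.

Definition dotv (R : pzRingType) (N : nat) (u v : 'rV[R]_N) : R :=
  \sum_(j < N) u 0 j * v 0 j.

(* Subspaces of K^n are represented (mxalgebra style) as row spaces of square
   matrices.  The orthogonal complement of the row space of A w.r.t. the
   standard bilinear form is the row space of kermx A^T
   (u *m A^T = 0 iff u is orthogonal to every row of A). *)
Definition orthmx (K : fieldType) (n : nat) (A : 'M[K]_n) : 'M[K]_n := kermx A^T.

Definition is_basis (K F : fieldType) (phi : {rmorphism K -> F}) (m : nat)
  (b : 'rV[F]_m) : Prop :=
  forall x : F, exists! a : 'rV[K]_m, x = \sum_(k < m) phi (a 0 k) * b 0 k.

Definition coordv (K : finFieldType) (F : fieldType) (phi : {rmorphism K -> F})
  (m : nat) (b : 'rV[F]_m) (x : F) : 'rV[K]_m :=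
  odflt 0 [pick a : 'rV[K]_m | x == \sum_(k < m) phi (a 0 k) * b 0 k].

Definition Gammamx (K : finFieldType) (F : fieldType) (phi : {rmorphism K -> F})
  (m n : nat) (b : 'rV[F]_m) (c : 'rV[F]_n) : 'M[K]_(m, n) :=
  \matrix_(k < m, j < n) coordv phi b (c 0 j) 0 k.

(* Sum-rank support of c in F^(sum n_i): the i-th component is the row space
   of Gamma_i(c^(i)), with c^(i) the i-th block (submxrow). *)
Definition supp_i (l : nat) (K : 'I_l -> finFieldType) (F : fieldType)
  (phi : forall i, {rmorphism K i -> F}) (m n : 'I_l -> nat)
  (b : forall i, 'rV[F]_(m i)) (c : 'rV[F]_(\sum_(i < l) n i)) (i : 'I_l)
  : 'M[K i]_(m i, n i) :=
  Gammamx (phi i) (b i) (submxrow c i).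

Definition dualcode (F : fieldType) (N : nat) (C : 'M[F]_N) : 'M[F]_N := kermx C^T.

Definition CodeL (l : nat) (K : 'I_l -> finFieldType) (F : fieldType)
  (phi : forall i, {rmorphism K i -> F}) (m n : 'I_l -> nat)
  (b : forall i, 'rV[F]_(m i)) (C : 'M[F]_(\sum_(i < l) n i))
  (L : forall i, 'M[K i]_(n i)) (c : 'rV[F]_(\sum_(i < l) n i)) : Prop :=
  (c <= dualcode C)%MS /\
  forall i : 'I_l, (supp_i phi b c i <= orthmx (L i))%MS.

Definition embedv (l : nat) (K : 'I_l -> finFieldType) (F : fieldType)
  (phi : forall i, {rmorphism K i -> F}) (n : 'I_l -> nat)
  (y : forall i, 'rV[K i]_(n i)) : 'rV[F]_(\sum_(i < l) n i) :=
  \mxrow_(i < l) map_mx (phi i) (y i).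

(* Expanding each entry of c in the basis b, c . phi(y) = sum_k phi((y Gamma(c)^T)_k) b_k,
   so by independence of b the form c . phi(y) vanishes iff y is orthogonal to every row
   of Gamma(c).  Hence the i-th support condition of C(L) says exactly that the i-th block
   of c annihilates phi(L_i); choosing families y supported on a single block shows that
   the blockwise conditions together are the single condition c . y = 0 for all y in L,
   which is linear in c. *)
From HB Require Import structures.
From mathcomp Require Import all_boot all_order all_algebra.
Import GRing.Theory.
Local Open Scope ring_scope.

Set Implicit Arguments. Unset Strict Implicit. Unset Printing Implicit Defensive.

Lemma sub_kermx_trP (K : fieldType) (p q n : nat) (A : 'M[K]_(p, n)) (B : 'M[K]_(q, n)) :
  reflect (forall y : 'rV_n, (y <= B)%MS -> y *m A^T = 0) (A <= kermx B^T)%MS.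
Proof.
apply: (iffP sub_kermxP) => [AB0 y /submxP[D ->] | yA0].
  by rewrite -mulmxA -[B]trmxK -trmx_mul AB0 trmx0 mulmx0.
have BA0 : B *m A^T = 0.
  by apply/row_matrixP => r; rewrite row_mul row0 yA0 // row_sub.
by rewrite -[A]trmxK -trmx_mul BA0 trmx0.
Qed.

Section DotProduct.

Variable R : pzRingType.

Lemma dotvE (N : nat) (u v : 'rV[R]_N) : dotv u v = (u *m v^T) 0 0.
Proof. by rewrite /dotv mxE; apply: eq_bigr => j _; rewrite mxE. Qed.

Lemma dotv0r (N : nat) (u : 'rV[R]_N) : dotv u 0 = 0.
Proof. by rewrite dotvE trmx0 mulmx0 mxE. Qed.

Lemma dotv0l (N : nat) (u : 'rV[R]_N) : dotv 0 u = 0.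
Proof. by rewrite dotvE mul0mx mxE. Qed.

Lemma dotvDl (N : nat) (a : R) (u v w : 'rV[R]_N) :
  dotv (a *: u + v) w = a * dotv u w + dotv v w.
Proof. by rewrite !dotvE mulmxDl -scalemxAl !mxE. Qed.

Lemma dotv_mxrow (l : nat) (n : 'I_l -> nat) (c : 'rV[R]_(\sum_(i < l) n i))
    (w : forall i, 'rV[R]_(n i)) :
  dotv c (\mxrow_(i < l) w i) = \sum_(i < l) dotv (submxrow c i) (w i).
Proof.
rewrite dotvE -{1}(submxrowK c) tr_mxrow mul_mxrow_mxcol summxE.
by apply: eq_bigr => i _; rewrite dotvE.
Qed.

End DotProduct.

Section Coordinates.

Variables (K : finFieldType) (F : fieldType) (phi : {rmorphism K -> F}).
Variables (m : nat) (b : 'rV[F]_m).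
Hypothesis hb : is_basis phi b.

Lemma coordvK (x : F) : \sum_(k < m) phi (coordv phi b x 0 k) * b 0 k = x.
Proof.
rewrite /coordv; case: pickP => [a /eqP // | no_coord].
by have [a [xa _]] := hb x; have := no_coord a; rewrite -xa eqxx.
Qed.

Lemma basis_comb_eq0 (a : 'rV[K]_m) : \sum_(k < m) phi (a 0 k) * b 0 k = 0 -> a = 0.
Proof.
have [a0 [_ uniq_coord]] := hb 0.
move=> a_comb0; rewrite -(uniq_coord a (esym a_comb0)); apply: uniq_coord.
by rewrite big1 // => k _; rewrite mxE rmorph0 mul0r.
Qed.

Lemma dotv_map_Gammamx (n : nat) (c : 'rV[F]_n) (y : 'rV[K]_n) :
  dotv c (map_mx phi y) = \sum_(k < m) phi ((y *m (Gammamx phi b c)^T) 0 k) * b 0 k.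
Proof.
rewrite /dotv.
under eq_bigr => j _ do rewrite -{1}(coordvK (c 0 j)) mulr_suml.
rewrite exchange_big /=; apply: eq_bigr => k _.
rewrite !mxE rmorph_sum mulr_suml; apply: eq_bigr => j _.
by rewrite !mxE rmorphM /= mulrAC (mulrC (phi _)).
Qed.

Lemma dotv_map_eq0 (n : nat) (c : 'rV[F]_n) (y : 'rV[K]_n) :
  dotv c (map_mx phi y) = 0 <-> y *m (Gammamx phi b c)^T = 0.
Proof.
rewrite dotv_map_Gammamx; split; first exact: basis_comb_eq0.
by move->; rewrite big1 // => k _; rewrite mxE rmorph0 mul0r.
Qed.

Lemma Gammamx_sub_orthmx (n : nat) (c : 'rV[F]_n) (L : 'M[K]_n) :
  (Gammamx phi b c <= orthmx L)%MS <->
  (forall y : 'rV_n, (y <= L)%MS -> dotv c (map_mx phi y) = 0).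
Proof.
split=> [/sub_kermx_trP G_L y yL | L_c]; first exact/dotv_map_eq0/G_L.
by apply/sub_kermx_trP => y /L_c/dotv_map_eq0.
Qed.

End Coordinates.

Lemma embedv_dotv_eq0 (l : nat) (K : 'I_l -> finFieldType) (F : fieldType)
    (phi : forall i, {rmorphism K i -> F}) (n : 'I_l -> nat)
    (L : forall i, 'M[K i]_(n i)) (c : 'rV[F]_(\sum_(i < l) n i)) :
  (forall y : forall i, 'rV[K i]_(n i),
     (forall i, (y i <= L i)%MS) -> dotv c (embedv phi y) = 0) <->
  (forall i (y : 'rV[K i]_(n i)),
     (y <= L i)%MS -> dotv (submxrow c i) (map_mx (phi i) y) = 0).
Proof.
split=> [c_L i yi yiL | c_L y yL].
  pose y := dfwith (fun j => 0 : 'rV[K j]_(n j)) yi.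
  have yL j : (y j <= L j)%MS by rewrite /y; case: dfwithP => [|j' _]; rewrite ?sub0mx.
  have := c_L y yL; rewrite /embedv dotv_mxrow (bigD1 i) //= /y dfwith_in big1 ?addr0 //.
  by move=> j /negbTE ji; rewrite dfwith_out ?map_mx0 ?dotv0r // eq_sym ji.
by rewrite /embedv dotv_mxrow big1 // => i _; apply: c_L.
Qed.

Section SubcodeCL.

Variables (l : nat) (n m : 'I_l -> nat) (F : fieldType) (K : 'I_l -> finFieldType).
Variables (phi : forall i, {rmorphism K i -> F}) (b : forall i, 'rV[F]_(m i)).
Hypothesis hb : forall i, is_basis (phi i) (b i).
Variables (C : 'M[F]_(\sum_(i < l) n i)) (L : forall i, 'M[K i]_(n i)).

Lemma CodeL_dotvP (c : 'rV[F]_(\sum_(i < l) n i)) : (c <= dualcode C)%MS ->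
  CodeL phi b C L c <->
  (forall y : forall i, 'rV[K i]_(n i),
     (forall i, (y i <= L i)%MS) -> dotv c (embedv phi y) = 0).
Proof.
move=> c_dual; apply: (iff_trans _ (iff_sym (embedv_dotv_eq0 phi L c))).
split=> [[_ supp_c] i | c_L].
  exact/Gammamx_sub_orthmx/supp_c.
by split=> // i; apply/(Gammamx_sub_orthmx (hb i))/c_L.
Qed.

Lemma CodeL_sub_dualcode (c : 'rV[F]_(\sum_(i < l) n i)) :
  CodeL phi b C L c -> (c <= dualcode C)%MS.
Proof. by case. Qed.

Lemma CodeL0 : CodeL phi b C L 0.
Proof. by apply/CodeL_dotvP; rewrite ?sub0mx // => y _; rewrite dotv0l. Qed.

Lemma CodeL_linear (a : F) (u v : 'rV[F]_(\sum_(i < l) n i)) :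
  CodeL phi b C L u -> CodeL phi b C L v -> CodeL phi b C L (a *: u + v).
Proof.
move=> Lu Lv; have u_dual := CodeL_sub_dualcode Lu; have v_dual := CodeL_sub_dualcode Lv.
have /(CodeL_dotvP u_dual) u_L := Lu; have /(CodeL_dotvP v_dual) v_L := Lv.
apply/CodeL_dotvP => [|y yL]; first by rewrite addmx_sub ?scalemx_sub.
by rewrite dotvDl u_L // v_L // mulr0 addr0.
Qed.

End SubcodeCL.

Theorem mainTheorem3 (l : nat) (n m : 'I_l -> nat)
  (F : finFieldType) (K : 'I_l -> finFieldType)
  (phi : forall i, {rmorphism K i -> F})
  (b : forall i, 'rV[F]_(m i))
  (hl : (0 < l)%N) (hn : forall i, (0 < n i)%N)
  (hb : forall i, is_basis (phi i) (b i))
  (C : 'M[F]_(\sum_(i < l) n i)) (L : forall i, 'M[K i]_(n i)) :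
  (forall c : 'rV[F]_(\sum_(i < l) n i), (c <= dualcode C)%MS ->
     (CodeL phi b C L c <->
      forall y : forall i, 'rV[K i]_(n i),
        (forall i, (y i <= L i)%MS) -> dotv c (embedv phi y) = 0))
  /\
  ((forall c, CodeL phi b C L c -> (c <= dualcode C)%MS) /\
   CodeL phi b C L 0 /\
   (forall (a : F) (u v : 'rV[F]_(\sum_(i < l) n i)),
      CodeL phi b C L u -> CodeL phi b C L v -> CodeL phi b C L (a *: u + v))).
Proof.
split; first exact: CodeL_dotvP.
split; first exact: CodeL_sub_dualcode.
by split; [exact: CodeL0 | exact: CodeL_linear].
Qed.
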